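(* Let $\mathbb{A}$ be a medial algebra over a field of characteristic not $2,3$ and let $c$ be a nonzero idempotent with $\ker L_c=0$. Then the function $\phi(x)=\dfrac{\det L_x}{\det L_c}$ satisfies $\phi(xy)=\phi(x)\phi(y)$ for all $x,y\in\mathbb{A}$.
   Context: All algebras are commutative, possibly nonassociative, finite-dimensional. Medial: $(xy)(zw)=(xz)(yw)$ identically. $L_x:y\mapsto xy$. *)

(* A finite-dimensional commutative (possibly nonassociative)
   algebra over a field F is modelled on coordinates F^n = 'rV[F]_n with a
   bilinear multiplication mul. *)
From HB Require Import structures.
From mathcomp Require Import all_boot all_order all_algebra.
Set Implicit Arguments. Unset Strict Implicit. Unset Printing Implicit Defensive.
Import Order.TTheory GRing.Theory.
Local Open Scope ring_scope.

Definition alg_bilinear (F : fieldType) (n : nat)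
  (mul : 'rV[F]_n -> 'rV[F]_n -> 'rV[F]_n) : Prop :=
  (forall x (a : F) y z, mul x (a *: y + z) = a *: mul x y + mul x z) /\
  (forall x (a : F) y z, mul (a *: y + z) x = a *: mul y x + mul z x).

Definition alg_commutative (F : fieldType) (n : nat)
  (mul : 'rV[F]_n -> 'rV[F]_n -> 'rV[F]_n) : Prop :=
  forall x y, mul x y = mul y x.

Definition alg_medial (F : fieldType) (n : nat)
  (mul : 'rV[F]_n -> 'rV[F]_n -> 'rV[F]_n) : Prop :=
  forall x y z w, mul (mul x y) (mul z w) = mul (mul x z) (mul y w).

Definition Lmx (F : fieldType) (n : nat)
  (mul : 'rV[F]_n -> 'rV[F]_n -> 'rV[F]_n) (x : 'rV[F]_n) : 'M[F]_n :=
  lin1_mx (mul x).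

(* Mediality says exactly that L_z L_(xy) = L_y L_(xz) as operators.  Taking
   determinants with z = c, and then with x = y = c (where c c = c and
   det L_c <> 0), gives det L_(cz) = det L_z and then
   det L_c det L_(xy) = det L_x det L_y. *)
From HB Require Import structures.
From mathcomp Require Import all_boot all_order all_algebra.
From mathcomp Require Import ring.
Set Implicit Arguments.
Unset Strict Implicit.
Import GRing.Theory.
Local Open Scope ring_scope.

Lemma mul_rV_lin1_fun (F : fieldType) (n : nat) (f : 'rV[F]_n -> 'rV[F]_n)
  (f_linear : forall (a : F) y z, f (a *: y + z) = a *: f y + f z) u :
  u *m lin1_mx f = f u.
Proof.
pose fL : {linear 'rV[F]_n -> 'rV[F]_n} :=
  HB.pack f (GRing.isLinear.Build F 'rV[F]_n 'rV[F]_n *:%R f f_linear).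
exact: mul_rV_lin1 fL u.
Qed.

Section MedialDeterminant.

Variables (F : fieldType) (n : nat) (mul : 'rV[F]_n -> 'rV[F]_n -> 'rV[F]_n).
Hypothesis mul_linear :
  forall x (a : F) y z, mul x (a *: y + z) = a *: mul x y + mul x z.
Hypothesis mul_medial : alg_medial mul.

Local Notation L := (Lmx mul).

Lemma mul_Lmx x u : u *m L x = mul x u.
Proof. exact: mul_rV_lin1_fun. Qed.

Lemma Lmx_medial x y z : L z *m L (mul x y) = L y *m L (mul x z).
Proof.
by apply/row_matrixP => i; rewrite !rowE !mulmxA !mul_Lmx mul_medial.
Qed.

Lemma det_Lmx_medial x y z :
  \det (L z) * \det (L (mul x y)) = \det (L y) * \det (L (mul x z)).
Proof. by rewrite -!det_mulmx Lmx_medial. Qed.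

Lemma det_Lmx_neq0 c : (forall y, mul c y = 0 -> y = 0) -> \det (L c) != 0.
Proof.
move=> c_inj; apply/negP => /det0P [v v_neq0].
by rewrite mul_Lmx => /c_inj/eqP; apply/negP.
Qed.

Variable c : 'rV[F]_n.
Hypotheses (c_idem : mul c c = c) (det_Lc_neq0 : \det (L c) != 0).

Lemma det_Lmx_mul_idem z : \det (L (mul c z)) = \det (L z).
Proof. by apply: (mulfI det_Lc_neq0); rewrite det_Lmx_medial c_idem mulrC. Qed.

Lemma det_Lmx_mul :
  alg_commutative mul ->
  forall x y, \det (L c) * \det (L (mul x y)) = \det (L x) * \det (L y).
Proof.
by move=> mul_comm x y; rewrite det_Lmx_medial mul_comm det_Lmx_mul_idem mulrC.
Qed.

End MedialDeterminant.

Theorem theorem3p10 (F : fieldType) (n : nat)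
  (mul : 'rV[F]_n -> 'rV[F]_n -> 'rV[F]_n)
  (hchar2 : (2%N \notin [pchar F])) (hchar3 : (3%N \notin [pchar F]))
  (hbil : alg_bilinear mul) (hcomm : alg_commutative mul)
  (hmed : alg_medial mul)
  (c : 'rV[F]_n) (hc0 : c != 0) (hcc : mul c c = c)
  (hker : forall y, mul c y = 0 -> y = 0) :
  let phi := fun x => \det (Lmx mul x) / \det (Lmx mul c) in
  forall x y, phi (mul x y) = phi x * phi y.
Proof.
move=> phi x y; case: hbil => mul_linear _.
have det_Lc_neq0 := det_Lmx_neq0 mul_linear hker.
have det_mul := det_Lmx_mul mul_linear hmed hcc det_Lc_neq0 hcomm x y.
by rewrite /phi mulf_div -det_mul; field.
Qed.
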